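(* Let $n\ge 2$ and $M=S+L\in M(n,\mathbb R)$ with $S\in\mathcal S_{\neq}$ and $L\in so(n)$, and suppose that $S$ and $L$ do not share any $k$-dimensional real invariant subspace, for every $k=1,\dots,n-1$. For $x>0$ let $\Pi_x=x^{-M}x^{-M^*}$. Then $$\bigcap_{x>0}G(\Pi_x)=\{I,-I\}.$$
   Context: $\mathcal S(n,\mathbb R)$ denotes the real symmetric $n\times n$ matrices, and $\mathcal S_{\neq}\subseteq\mathcal S(n,\mathbb R)$ the symmetric matrices whose $n$ eigenvalues are pairwise distinct. $so(n)$ denotes the real skew-symmetric $n\times n$ matrices. For $x>0$, $x^{-M}=\exp(-M\log x)$. A real invariant subspace of a matrix $T\in M(n,\mathbb R)$ is a linear subspace $V\subseteq\mathbb R^n$ with $TV\subseteq V$. For a matrix $\Pi\in M(n,\mathbb R)$, $G(\Pi)=\{O\in O(n):O\Pi=\Pi O\}$, where $O(n)$ is the orthogonal group. No restriction on the eigenvalues of $M$ is imposed. *)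

(* real matrices are represented as functions nat -> nat -> R,
   only the entries with indices < n being relevant. *)
From Stdlib Require Import Reals Lra Lia List ClassicalEpsilon Factorial.
Open Scope R_scope.

Definition vec := nat -> R.
Definition mat := nat -> nat -> R.

Definition fsum (n : nat) (f : nat -> R) : R :=
  fold_right Rplus 0 (map f (seq 0 n)).

Definition mmul (n : nat) (A B : mat) : mat :=
  fun i j => fsum n (fun k => A i k * B k j).
Definition madd (A B : mat) : mat := fun i j => A i j + B i j.
Definition mscale (c : R) (A : mat) : mat := fun i j => c * A i j.
Definition mopp (A : mat) : mat := fun i j => - A i j.
Definition mtr (A : mat) : mat := fun i j => A j i.
Definition mid : mat := fun i j => if Nat.eqb i j then 1 else 0.
Definition mapply (n : nat) (A : mat) (v : vec) : vec :=
  fun i => fsum n (fun k => A i k * v k).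

Definition meq (n : nat) (A B : mat) : Prop :=
  forall i j, (i < n)%nat -> (j < n)%nat -> A i j = B i j.

Fixpoint mpow (n : nat) (A : mat) (m : nat) : mat :=
  match m with
  | O => mid
  | S m' => mmul n A (mpow n A m')
  end.

Definition is_mexp (n : nat) (A E : mat) : Prop :=
  forall i j, (i < n)%nat -> (j < n)%nat ->
    Un_cv (fun N => sum_f_R0 (fun m => mpow n A m i j / INR (fact m)) N) (E i j).

Definition mexp (n : nat) (A : mat) : mat :=
  epsilon (inhabits (fun _ _ => 0)) (is_mexp n A).

Definition mxpowneg (n : nat) (x : R) (M : mat) : mat :=
  mexp n (mscale (- ln x) M).

(* Pi_x = x^{-M} x^{-M^*}, with M^* the transpose (real matrices) *)
Definition Pi (n : nat) (M : mat) (x : R) : mat :=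
  mmul n (mxpowneg n x M) (mxpowneg n x (mtr M)).

Definition symmetric (n : nat) (A : mat) : Prop := meq n (mtr A) A.
Definition skew (n : nat) (A : mat) : Prop := meq n (mtr A) (mopp A).

Definition is_eigenvalue (n : nat) (A : mat) (lam : R) : Prop :=
  exists v : vec, (exists i, (i < n)%nat /\ v i <> 0) /\
    forall i, (i < n)%nat -> mapply n A v i = lam * v i.

Definition sym_distinct (n : nat) (S : mat) : Prop :=
  symmetric n S /\
  exists lam : nat -> R,
    (forall i j, (i < n)%nat -> (j < n)%nat -> i <> j -> lam i <> lam j) /\
    (forall i, (i < n)%nat -> is_eigenvalue n S (lam i)).

(* a k-dimensional subspace of R^n given by a basis b 0, ..., b (k-1) *)
Definition lin_indep (n k : nat) (b : nat -> vec) : Prop :=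
  forall c : nat -> R,
    (forall r, (r < n)%nat -> fsum k (fun l => c l * b l r) = 0) ->
    forall l, (l < k)%nat -> c l = 0.

Definition in_span (n k : nat) (b : nat -> vec) (v : vec) : Prop :=
  exists c : nat -> R, forall r, (r < n)%nat -> v r = fsum k (fun l => c l * b l r).

Definition invariant_span (n k : nat) (A : mat) (b : nat -> vec) : Prop :=
  forall l, (l < k)%nat -> in_span n k b (mapply n A (b l)).

Definition share_invariant (n k : nat) (A B : mat) : Prop :=
  exists b : nat -> vec, lin_indep n k b /\
    invariant_span n k A b /\ invariant_span n k B b.

Definition orthogonal (n : nat) (O : mat) : Prop := meq n (mmul n (mtr O) O) mid.

Definition inG (n : nat) (Pm O : mat) : Prop :=
  orthogonal n O /\ meq n (mmul n O Pm) (mmul n Pm O).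

(* Put x = e^t.  Expanding e^{-tM} e^{-tM^T} to second order at t = 0+ gives
   Pi(e^t) = I - 2tS + t^2 (2S^2 + LS - SL) + O(t^3), so an orthogonal O commuting
   with every Pi_x commutes with S and with 2S^2 + LS - SL.  As S has simple
   spectrum, O acts on each eigenvector v_i of S by a sign s_i = +1 or -1, and
   commuting with the second coefficient gives (s_i - s_j)(lam_j - lam_i) <v_i, L v_j> = 0.
   Hence the span of the v_i with s_i = +1 is invariant under S and L; by hypothesis it
   is 0 or R^n, i.e. O = -I or O = I. *)

From Stdlib Require Import Reals Lra Lia List Permutation ClassicalEpsilon Classical Factorial.
Open Scope R_scope.

Lemma fold_right_Rplus_init (l : list R) a :
  fold_right Rplus a l = a + fold_right Rplus 0 l.
Proof. induction l as [|x l IH]; simpl; [ring|rewrite IH; ring]. Qed.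

Lemma fsum_S n f : fsum (S n) f = fsum n f + f n.
Proof.
  unfold fsum. rewrite seq_S, map_app, fold_right_app; simpl.
  rewrite fold_right_Rplus_init. ring.
Qed.

Lemma fsum_ext n f g :
  (forall k, (k < n)%nat -> f k = g k) -> fsum n f = fsum n g.
Proof.
  induction n as [|n IH]; intros H; [reflexivity|].
  rewrite !fsum_S, IH, H; auto; intros; apply H; lia.
Qed.

Lemma fsum_plus n f g : fsum n (fun k => f k + g k) = fsum n f + fsum n g.
Proof. induction n as [|n IH]; [unfold fsum; simpl; ring|rewrite !fsum_S, IH; ring]. Qed.

Lemma fsum_scal n c f : fsum n (fun k => c * f k) = c * fsum n f.
Proof. induction n as [|n IH]; [unfold fsum; simpl; ring|rewrite !fsum_S, IH; ring]. Qed.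

Lemma fsum_scal_r n c f : fsum n (fun k => f k * c) = fsum n f * c.
Proof. induction n as [|n IH]; [unfold fsum; simpl; ring|rewrite !fsum_S, IH; ring]. Qed.

Lemma fsum_minus n f g : fsum n (fun k => f k - g k) = fsum n f - fsum n g.
Proof.
  rewrite (fsum_ext _ _ (fun k => f k + (-1) * g k)) by (intros; ring).
  rewrite fsum_plus, fsum_scal. ring.
Qed.

Lemma fsum_zero n : fsum n (fun _ => 0) = 0.
Proof. induction n as [|n IH]; [reflexivity|rewrite fsum_S, IH; ring]. Qed.

Lemma fsum_const n c : fsum n (fun _ => c) = INR n * c.
Proof. induction n as [|n IH]; [unfold fsum; simpl; ring|rewrite fsum_S, IH, S_INR; ring]. Qed.

Lemma fsum_comm n m (f : nat -> nat -> R) :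
  fsum n (fun i => fsum m (fun j => f i j)) = fsum m (fun j => fsum n (fun i => f i j)).
Proof.
  induction n as [|n IH]; [symmetry; apply fsum_zero|].
  rewrite fsum_S, IH, <- fsum_plus. apply fsum_ext. intros. now rewrite fsum_S.
Qed.

Lemma fsum_single n m f : (m < n)%nat ->
  (forall k, (k < n)%nat -> k <> m -> f k = 0) -> fsum n f = f m.
Proof.
  induction n as [|n IH]; intros Hm H; [lia|].
  rewrite fsum_S. destruct (Nat.eq_dec m n) as [->|Hmn].
  - rewrite (fsum_ext _ _ (fun _ => 0)), fsum_zero; [ring|].
    intros; apply H; lia.
  - rewrite IH, (H n); [ring|lia|lia|lia|intros; apply H; lia].
Qed.

Lemma fsum_le n f g :
  (forall k, (k < n)%nat -> f k <= g k) -> fsum n f <= fsum n g.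
Proof.
  induction n as [|n IH]; intros H; [unfold fsum; simpl; lra|].
  rewrite !fsum_S. apply Rplus_le_compat; [apply IH; intros|]; apply H; lia.
Qed.

Lemma fsum_abs n f : Rabs (fsum n f) <= fsum n (fun k => Rabs (f k)).
Proof.
  induction n as [|n IH]; [unfold fsum; simpl; rewrite Rabs_R0; lra|].
  rewrite !fsum_S. eapply Rle_trans; [apply Rabs_triang|lra].
Qed.

Lemma fsum_ge_term n m f : (forall k, (k < n)%nat -> 0 <= f k) -> (m < n)%nat ->
  f m <= fsum n f.
Proof.
  induction n as [|n IH]; intros H Hm; [lia|]. rewrite fsum_S.
  assert (0 <= f n) by (apply H; lia).
  destruct (Nat.eq_dec m n) as [->|Hmn].
  - assert (0 <= fsum n f) by (rewrite <- (fsum_zero n); apply fsum_le; intros; apply H; lia).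
    lra.
  - assert (f m <= fsum n f) by (apply IH; [intros; apply H|]; lia). lra.
Qed.

Definition swapf (p q l : nat) : nat :=
  if Nat.eqb l p then q else if Nat.eqb l q then p else l.

Lemma swapf_invol p q l : swapf p q (swapf p q l) = l.
Proof.
  unfold swapf. destruct (Nat.eqb l p) eqn:E1; destruct (Nat.eqb l q) eqn:E2;
  repeat (match goal with |- context [Nat.eqb ?a ?b] => destruct (Nat.eqb a b) eqn:? end);
  rewrite ?Nat.eqb_eq, ?Nat.eqb_neq in *; lia.
Qed.

Lemma swapf_lt p q k l : (p < k)%nat -> (q < k)%nat -> (l < k)%nat -> (swapf p q l < k)%nat.
Proof. unfold swapf. destruct (Nat.eqb l p), (Nat.eqb l q); lia. Qed.

Lemma fsum_swapf k p q f : (p < k)%nat -> (q < k)%nat ->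
  fsum k (fun l => f (swapf p q l)) = fsum k f.
Proof.
  intros Hp Hq. unfold fsum. rewrite <- (map_map (swapf p q) f).
  assert (Hperm : Permutation (map (swapf p q) (seq 0 k)) (seq 0 k)).
  { apply NoDup_Permutation; [| apply seq_NoDup |].
    - apply FinFun.Injective_map_NoDup; [|apply seq_NoDup].
      intros a b E. now rewrite <- (swapf_invol p q a), E, swapf_invol.
    - intros x. rewrite in_map_iff, in_seq. split.
      + intros [y [<- Hy]]. rewrite in_seq in Hy. pose proof (swapf_lt p q k y). lia.
      + intros Hx. exists (swapf p q x). rewrite swapf_invol, in_seq.
        pose proof (swapf_lt p q k x). lia. }
  apply (Permutation_map f) in Hperm. induction Hperm; simpl; lra.
Qed.

(** * Linear dependence and orthogonal families *)

Definition lin_dependent (n k : nat) (b : nat -> vec) : Prop :=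
  exists c : nat -> R, (exists l, (l < k)%nat /\ c l <> 0) /\
    forall r, (r < n)%nat -> fsum k (fun l => c l * b l r) = 0.

Lemma lin_dependent_pivot n q (b : nat -> vec) :
  (forall b', lin_dependent n q b') -> b q n <> 0 -> lin_dependent (S n) (S q) b.
Proof.
  intros IH Hpiv.
  set (b' := fun l r => b l r - (b l n / b q n) * b q r).
  destruct (IH b') as [c' [[l0 [Hl0 Hc0]] Hc']].
  set (cq := - fsum q (fun l => c' l * (b l n / b q n))).
  exists (fun l => if Nat.ltb l q then c' l else cq). split.
  { exists l0. split; [lia|]. now rewrite (proj2 (Nat.ltb_lt _ _) Hl0). }
  intros r Hr. rewrite fsum_S, Nat.ltb_irrefl.
  rewrite (fsum_ext q _ (fun l => c' l * b l r))
    by (intros l Hl; now rewrite (proj2 (Nat.ltb_lt _ _) Hl)).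
  assert (Hb' : fsum q (fun l => c' l * b' l r) = fsum q (fun l => c' l * b l r) + cq * b q r).
  { unfold b', cq.
    rewrite (fsum_ext q _ (fun l => c' l * b l r - c' l * (b l n / b q n) * b q r)) by (intros; ring).
    rewrite fsum_minus, fsum_scal_r. ring. }
  rewrite <- Hb'. destruct (Nat.eq_dec r n) as [->|Hrn].
  - rewrite <- (fsum_zero q). apply fsum_ext. intros. unfold b'. field. exact Hpiv.
  - apply Hc'. lia.
Qed.

Lemma lin_dependent_gt_dim n : forall k (b : nat -> vec), (n < k)%nat -> lin_dependent n k b.
Proof.
  induction n as [|n IH]; intros k b Hk.
  { exists (fun _ => 1). split; [exists 0%nat; split; [lia|lra]|]. intros; lia. }
  destruct (classic (exists p, (p < k)%nat /\ b p n <> 0)) as [[p [Hp Hpiv]]|Hzero].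
  - (* move the pivot vector to the last position *)
    set (q := pred k). assert (Hq : k = S q) by lia.
    destruct (lin_dependent_pivot n q (fun l => b (swapf p q l))) as [c [[l0 [Hl0 Hc0]] Hc]].
    { intros; apply IH. lia. }
    { unfold swapf. rewrite Nat.eqb_refl. destruct (Nat.eqb_spec q p); congruence. }
    rewrite <- Hq in Hl0, Hc.
    exists (fun l => c (swapf p q l)). split.
    + exists (swapf p q l0). rewrite swapf_invol. split; [apply swapf_lt|]; auto; lia.
    + intros r Hr. rewrite <- (Hc r Hr), <- (fsum_swapf k p q) by lia.
      apply fsum_ext. intros. now rewrite swapf_invol.
  - destruct (IH k b) as [c [Hc0 Hc]]; [lia|]. exists c. split; [exact Hc0|].
    intros r Hr. destruct (Nat.eq_dec r n) as [->|Hrn]; [|apply Hc; lia].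
    rewrite <- (fsum_zero k). apply fsum_ext. intros l Hl.
    destruct (Req_dec (b l n) 0) as [->|Hbl]; [ring|exfalso; eauto].
Qed.

Definition dot (n : nat) (x y : vec) : R := fsum n (fun r => x r * y r).

Lemma dot_ext n x y x' y' :
  (forall r, (r < n)%nat -> x r = x' r) -> (forall r, (r < n)%nat -> y r = y' r) ->
  dot n x y = dot n x' y'.
Proof. intros Hx Hy. apply fsum_ext. intros. now rewrite Hx, Hy. Qed.

Lemma dot_comm n x y : dot n x y = dot n y x.
Proof. apply fsum_ext. intros; ring. Qed.

Lemma dot_scal_l n a x y : dot n (fun r => a * x r) y = a * dot n x y.
Proof. unfold dot. rewrite <- fsum_scal. apply fsum_ext. intros; ring. Qed.

Lemma dot_scal_r n a x y : dot n x (fun r => a * y r) = a * dot n x y.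
Proof. unfold dot. rewrite <- fsum_scal. apply fsum_ext. intros; ring. Qed.

Lemma dot_minus_r n x y z : dot n x (fun r => y r - z r) = dot n x y - dot n x z.
Proof. unfold dot. rewrite <- fsum_minus. apply fsum_ext. intros; ring. Qed.

Lemma dot_fsum_r n k x c (b : nat -> vec) :
  dot n x (fun r => fsum k (fun l => c l * b l r)) = fsum k (fun l => c l * dot n x (b l)).
Proof.
  unfold dot. rewrite (fsum_ext n _ (fun r => fsum k (fun l => x r * (c l * b l r))))
    by (intros; now rewrite <- fsum_scal).
  rewrite fsum_comm. apply fsum_ext. intros. rewrite <- fsum_scal.
  apply fsum_ext. intros. ring.
Qed.

Lemma dot_self_pos n x : (exists i, (i < n)%nat /\ x i <> 0) -> 0 < dot n x x.
Proof.
  intros [i [Hi Hx]].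
  assert (x i * x i <= dot n x x)
    by (apply (fsum_ge_term n i (fun r => x r * x r)); auto; intros; nra).
  nra.
Qed.

Lemma dot_zero_r n x y : (forall r, (r < n)%nat -> y r = 0) -> dot n x y = 0.
Proof. intros H. rewrite <- (fsum_zero n). apply fsum_ext. intros. rewrite H; auto; ring. Qed.

Section OrthogonalFamily.
Variable n : nat.
Variable v : nat -> vec.
Hypothesis v_orth : forall i j, (i < n)%nat -> (j < n)%nat -> i <> j -> dot n (v i) (v j) = 0.
Hypothesis v_pos : forall i, (i < n)%nat -> 0 < dot n (v i) (v i).

Lemma orth_family_lin_indep k (sigma : nat -> nat) :
  (forall l, (l < k)%nat -> (sigma l < n)%nat) ->
  (forall l m, (l < k)%nat -> (m < k)%nat -> sigma l = sigma m -> l = m) ->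
  lin_indep n k (fun l => v (sigma l)).
Proof.
  intros Hlt Hinj c Hc m Hm.
  assert (E : dot n (v (sigma m)) (fun r => fsum k (fun l => c l * v (sigma l) r)) = 0)
    by (apply dot_zero_r; exact Hc).
  rewrite (dot_fsum_r n k _ c (fun l => v (sigma l))), (fsum_single k m) in E; auto.
  - pose proof (v_pos (sigma m) (Hlt m Hm)). nra.
  - intros l Hl Hlm. rewrite v_orth; auto. ring.
Qed.

Lemma orth_family_complete w : (forall j, (j < n)%nat -> dot n (v j) w = 0) ->
  forall r, (r < n)%nat -> w r = 0.
Proof.
  intros Hw.
  destruct (lin_dependent_gt_dim n (S n) (fun l => if Nat.ltb l n then v l else w))
    as [c [[l0 [Hl0 Hc0]] Hc]]; [lia|].
  assert (Hv : forall r, (r < n)%nat -> fsum n (fun l => c l * v l r) + c n * w r = 0).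
  { intros r Hr. rewrite <- (Hc r Hr), fsum_S, Nat.ltb_irrefl. f_equal.
    apply fsum_ext. intros l Hl. now rewrite (proj2 (Nat.ltb_lt _ _) Hl). }
  assert (Hcv : forall m, (m < n)%nat -> c m = 0).
  { intros m Hm.
    assert (E : dot n (v m) (fun r => fsum n (fun l => c l * v l r) + c n * w r) = 0)
      by (apply dot_zero_r; exact Hv).
    unfold dot in E. rewrite (fsum_ext n _ (fun r => v m r * fsum n (fun l => c l * v l r)
      + c n * (v m r * w r))) in E by (intros; ring).
    rewrite fsum_plus, fsum_scal in E. fold (dot n (v m) w) in E.
    change (fsum n (fun r => v m r * fsum n (fun l => c l * v l r)))
      with (dot n (v m) (fun r => fsum n (fun l => c l * v l r))) in E.
    rewrite Hw, dot_fsum_r, (fsum_single n m) in E; auto.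
    - pose proof (v_pos m Hm). nra.
    - intros l Hl Hlm. rewrite v_orth; auto; ring. }
  assert (Hcn : c n <> 0)
    by (destruct (Nat.eq_dec l0 n) as [<-|]; auto; exfalso; apply Hc0, Hcv; lia).
  intros r Hr. specialize (Hv r Hr).
  rewrite (fsum_ext _ _ (fun _ => 0)), fsum_zero in Hv by (intros; rewrite Hcv; auto; ring).
  rewrite Rplus_0_l in Hv. apply Rmult_integral in Hv as [|]; [contradiction|auto].
Qed.

Lemma orth_family_expand w r : (r < n)%nat ->
  w r = fsum n (fun j => (dot n (v j) w / dot n (v j) (v j)) * v j r).
Proof.
  intros Hr. apply Rminus_diag_uniq.
  apply (orth_family_complete (fun r => w r - fsum n (fun j => (dot n (v j) w / dot n (v j) (v j)) * v j r))); auto.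
  intros j Hj. rewrite dot_minus_r, dot_fsum_r, (fsum_single n j); auto.
  - pose proof (v_pos j Hj). field. lra.
  - intros k Hk Hkj. rewrite (v_orth j k); auto. ring.
Qed.
End OrthogonalFamily.

Lemma fsum_mid_l n w i : (i < n)%nat -> fsum n (fun k => mid i k * w k) = w i.
Proof.
  intros Hi. rewrite (fsum_single n i); [unfold mid; rewrite Nat.eqb_refl; ring|auto|].
  intros k _ Hk. unfold mid. destruct (Nat.eqb_spec i k); [lia|ring].
Qed.

Lemma fsum_mid_r n w j : (j < n)%nat -> fsum n (fun k => w k * mid k j) = w j.
Proof.
  intros Hj. rewrite <- (fsum_mid_l n w j Hj). apply fsum_ext. intros k _.
  unfold mid. destruct (Nat.eqb_spec k j), (Nat.eqb_spec j k); lia || ring.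
Qed.

Lemma mmul_mid_r n A i j : (j < n)%nat -> mmul n A mid i j = A i j.
Proof. apply (fsum_mid_r n (fun k => A i k)). Qed.

Lemma mapply_ext n A x y i :
  (forall r, (r < n)%nat -> x r = y r) -> mapply n A x i = mapply n A y i.
Proof. intros H. apply fsum_ext. intros. now rewrite H. Qed.

Lemma mapply_meq n A B x i : meq n A B -> (i < n)%nat -> mapply n A x i = mapply n B x i.
Proof. intros H Hi. apply fsum_ext. intros. now rewrite H. Qed.

Lemma mapply_mmul n A B x i : mapply n (mmul n A B) x i = mapply n A (mapply n B x) i.
Proof.
  unfold mapply, mmul.
  rewrite (fsum_ext n _ (fun k => fsum n (fun l => A i l * B l k * x k)))
    by (intros; now rewrite <- fsum_scal_r).
  rewrite fsum_comm. apply fsum_ext. intros. rewrite <- fsum_scal.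
  apply fsum_ext. intros. ring.
Qed.

Lemma mapply_mid n x i : (i < n)%nat -> mapply n mid x i = x i.
Proof. apply fsum_mid_l. Qed.

Lemma mapply_madd n A B x i : mapply n (madd A B) x i = mapply n A x i + mapply n B x i.
Proof. unfold mapply, madd. rewrite <- fsum_plus. apply fsum_ext. intros; ring. Qed.

Lemma mapply_mscale n c A x i : mapply n (mscale c A) x i = c * mapply n A x i.
Proof. unfold mapply, mscale. rewrite <- fsum_scal. apply fsum_ext. intros; ring. Qed.

Lemma mapply_mopp n A x i : mapply n (mopp A) x i = - mapply n A x i.
Proof.
  unfold mapply, mopp. rewrite (fsum_ext _ _ (fun k => -1 * (A i k * x k))) by (intros; ring).
  rewrite fsum_scal. ring.
Qed.

Lemma mapply_fsum n A k c (b : nat -> vec) i :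
  mapply n A (fun r => fsum k (fun l => c l * b l r)) i
  = fsum k (fun l => c l * mapply n A (b l) i).
Proof.
  unfold mapply. rewrite (fsum_ext n _ (fun r => fsum k (fun l => A i r * (c l * b l r))))
    by (intros; now rewrite <- fsum_scal).
  rewrite fsum_comm. apply fsum_ext. intros. rewrite <- fsum_scal.
  apply fsum_ext. intros. ring.
Qed.

Lemma mapply_scal n A a x i : mapply n A (fun r => a * x r) i = a * mapply n A x i.
Proof. unfold mapply. rewrite <- fsum_scal. apply fsum_ext. intros; ring. Qed.

Lemma dot_mapply n x A y : dot n x (mapply n A y) = dot n (mapply n (mtr A) x) y.
Proof.
  unfold dot, mapply, mtr.
  rewrite (fsum_ext n _ (fun r => fsum n (fun k => x r * A r k * y k)))
    by (intros; rewrite <- fsum_scal; apply fsum_ext; intros; ring).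
  rewrite fsum_comm. apply fsum_ext. intros. rewrite <- fsum_scal_r.
  apply fsum_ext. intros. ring.
Qed.

Lemma mapply_mtr_sym n S x i : symmetric n S -> (i < n)%nat ->
  mapply n (mtr S) x i = mapply n S x i.
Proof. apply mapply_meq. Qed.

Lemma mapply_mtr_skew n L x i : skew n L -> (i < n)%nat ->
  mapply n (mtr L) x i = - mapply n L x i.
Proof. intros HL Hi. rewrite <- mapply_mopp. now apply mapply_meq. Qed.

Lemma dot_sym n S x y : symmetric n S -> dot n x (mapply n S y) = dot n (mapply n S x) y.
Proof. intros HS. rewrite dot_mapply. apply dot_ext; auto. intros. now apply mapply_mtr_sym. Qed.

Definition eigvec (n : nat) (A : mat) (a : R) (x : vec) : Prop :=
  forall r, (r < n)%nat -> mapply n A x r = a * x r.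

Lemma dot_eigvec_sym n S a b x y : symmetric n S -> eigvec n S a x -> eigvec n S b y ->
  a <> b -> dot n x y = 0.
Proof.
  intros HS Hx Hy Hab.
  assert (E : b * dot n x y = a * dot n x y).
  { rewrite <- dot_scal_r, <- dot_scal_l, <- (dot_ext n x (mapply n S y) x _),
      <- (dot_ext n (mapply n S x) y _ y); auto. apply dot_sym; auto. }
  apply Rmult_eq_reg_l with (b - a); [|lra]. lra.
Qed.

Lemma orthogonal_dot n O x y : orthogonal n O ->
  dot n (mapply n O x) (mapply n O y) = dot n x y.
Proof.
  intros HO. rewrite dot_comm, dot_mapply, dot_comm. apply dot_ext; auto.
  intros. now rewrite <- mapply_mmul, (mapply_meq n _ mid), mapply_mid.
Qed.

(** * Expansions at 0+ *)

Definition bigO (k : nat) (f : R -> R) : Prop :=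
  exists K t0, 0 < t0 /\ forall t, 0 < t <= t0 -> Rabs (f t) <= K * t ^ k.

Lemma bigO_normalize k f : bigO k f ->
  exists K t0, 0 <= K /\ 0 < t0 <= 1 /\ forall t, 0 < t <= t0 -> Rabs (f t) <= K * t ^ k.
Proof.
  intros [K [t0 [Ht0 H]]]. exists (Rabs K), (Rmin t0 1).
  split; [apply Rabs_pos|split; [split; [apply Rmin_pos|apply Rmin_r]; lra|]].
  intros t Ht. assert (t <= t0) by (pose proof (Rmin_l t0 1); lra).
  eapply Rle_trans; [apply H; lra|]. apply Rmult_le_compat_r; [apply pow_le; lra|apply RRle_abs].
Qed.

Lemma bigO_ext k f g : (forall t, 0 < t -> f t = g t) -> bigO k f -> bigO k g.
Proof. intros E [K [t0 [Ht0 H]]]. exists K, t0. split; auto. intros. rewrite <- E; [auto|lra]. Qed.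

Lemma bigO_plus k f g : bigO k f -> bigO k g -> bigO k (fun t => f t + g t).
Proof.
  intros [K1 [t1 [Ht1 H1]]] [K2 [t2 [Ht2 H2]]]. exists (K1 + K2), (Rmin t1 t2).
  split; [now apply Rmin_pos|]. intros t Ht.
  pose proof (Rmin_l t1 t2). pose proof (Rmin_r t1 t2).
  eapply Rle_trans; [apply Rabs_triang|].
  assert (Rabs (f t) <= K1 * t ^ k) by (apply H1; lra).
  assert (Rabs (g t) <= K2 * t ^ k) by (apply H2; lra). lra.
Qed.

Lemma bigO_scal k c f : bigO k f -> bigO k (fun t => c * f t).
Proof.
  intros Hf. destruct (bigO_normalize k f Hf) as [K [t0 [HK [Ht0 H]]]].
  exists (Rabs c * K), t0. split; [lra|]. intros t Ht. rewrite Rabs_mult, Rmult_assoc.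
  apply Rmult_le_compat_l; [apply Rabs_pos|auto].
Qed.

Lemma bigO_weaken j k f : (j <= k)%nat -> bigO k f -> bigO j f.
Proof.
  intros Hjk Hf. destruct (bigO_normalize k f Hf) as [K [t0 [HK [Ht0 H]]]].
  exists K, t0. split; [lra|]. intros t Ht. eapply Rle_trans; [now apply H|].
  apply Rmult_le_compat_l; [auto|].
  replace k with (j + (k - j))%nat by lia. rewrite pow_add.
  rewrite <- (Rmult_1_r (t ^ j)) at 2. apply Rmult_le_compat_l; [apply pow_le; lra|].
  rewrite <- (pow1 (k - j)). apply pow_incr. lra.
Qed.

Lemma bigO_monomial k j c : (k <= j)%nat -> bigO k (fun t => c * t ^ j).
Proof.
  intros Hkj. apply (bigO_weaken k j); auto. exists (Rabs c), 1.
  split; [lra|]. intros t Ht. rewrite Rabs_mult, (Rabs_pos_eq (t ^ j)); [lra|apply pow_le; lra].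
Qed.

Lemma bigO_mul j k f g : bigO j f -> bigO k g -> bigO (j + k) (fun t => f t * g t).
Proof.
  intros Hf Hg.
  destruct (bigO_normalize j f Hf) as [K1 [t1 [HK1 [Ht1 H1]]]].
  destruct (bigO_normalize k g Hg) as [K2 [t2 [HK2 [Ht2 H2]]]].
  exists (K1 * K2), (Rmin t1 t2). split; [apply Rmin_pos; lra|]. intros t Ht.
  pose proof (Rmin_l t1 t2). pose proof (Rmin_r t1 t2).
  rewrite Rabs_mult, pow_add.
  replace (K1 * K2 * (t ^ j * t ^ k)) with ((K1 * t ^ j) * (K2 * t ^ k)) by ring.
  apply Rmult_le_compat; try apply Rabs_pos; [apply H1|apply H2]; lra.
Qed.

Lemma bigO_div k f : bigO (S k) f -> bigO k (fun t => f t / t).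
Proof.
  intros [K [t0 [Ht0 H]]]. exists K, t0. split; auto. intros t Ht.
  unfold Rdiv. rewrite Rabs_mult, Rabs_inv, (Rabs_pos_eq t) by lra.
  apply Rmult_le_reg_r with t; [lra|].
  rewrite Rmult_assoc, Rinv_l, Rmult_1_r by lra.
  replace (K * t ^ k * t) with (K * t ^ S k) by (simpl; ring). apply H. auto.
Qed.

Lemma bigO1_const c : bigO 1 (fun _ => c) -> c = 0.
Proof.
  intros Hc. destruct (bigO_normalize 1 _ Hc) as [K [t0 [HK [Ht0 H]]]].
  destruct (Req_dec c 0) as [|Hc0]; [assumption|exfalso].
  pose proof (Rabs_pos_lt c Hc0) as Hpos.
  set (t := Rmin t0 (Rabs c / (2 * (K + 1)))).
  assert (Htpos : 0 < t) by (apply Rmin_pos; [lra|apply Rdiv_lt_0_compat; lra]).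
  assert (Ht : t <= Rabs c / (2 * (K + 1))) by apply Rmin_r.
  assert (Hbound : Rabs c <= K * t) by (rewrite <- (pow_1 t); apply H; split; [lra|apply Rmin_l]).
  apply (Rmult_le_compat_l (2 * (K + 1))) in Ht; [|lra].
  replace (2 * (K + 1) * (Rabs c / (2 * (K + 1)))) with (Rabs c) in Ht by (field; lra).
  nra.
Qed.

Lemma bigO_peel k c g : bigO 0 g -> bigO (S k) (fun t => c + t * g t) ->
  c = 0 /\ bigO k g.
Proof.
  intros Hg Hcg.
  assert (Htg : bigO 1 (fun t => t * g t)).
  { apply (bigO_ext 1 (fun t => (1 * t ^ 1) * g t)); [intros; simpl; ring|].
    apply (bigO_mul 1 0); [apply bigO_monomial|]; auto. }
  assert (Hc : c = 0).
  { apply bigO1_const, (bigO_ext 1 (fun t => (c + t * g t) + -1 * (t * g t))); [intros; ring|].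
    apply bigO_plus; [apply (bigO_weaken 1 (S k)); [lia|auto]|now apply bigO_scal]. }
  split; [exact Hc|]. subst c.
  apply (bigO_ext k (fun t => (0 + t * g t) / t)); [intros; field; lra|].
  now apply bigO_div.
Qed.

Definition taylor2 (a : R -> R) (a0 a1 a2 : R) : Prop :=
  bigO 3 (fun t => a t - (a0 + a1 * t + a2 * t ^ 2)).

Lemma taylor2_ext a b a0 a1 a2 :
  (forall t, 0 < t -> a t = b t) -> taylor2 a a0 a1 a2 -> taylor2 b a0 a1 a2.
Proof. intros E. apply bigO_ext. intros t Ht. now rewrite E. Qed.

Lemma taylor2_const c : taylor2 (fun _ => c) c 0 0.
Proof. apply (bigO_ext 3 (fun t => 0 * t ^ 3)); [intros; ring|now apply bigO_monomial]. Qed.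

Lemma taylor2_plus a b a0 a1 a2 b0 b1 b2 : taylor2 a a0 a1 a2 -> taylor2 b b0 b1 b2 ->
  taylor2 (fun t => a t + b t) (a0 + b0) (a1 + b1) (a2 + b2).
Proof. intros Ha Hb. eapply bigO_ext; [|apply (bigO_plus _ _ _ Ha Hb)]. intros; simpl; ring. Qed.

Lemma bigO0_quadratic a0 a1 a2 : bigO 0 (fun t => a0 + a1 * t + a2 * t ^ 2).
Proof.
  apply (bigO_ext 0 (fun t => a0 * t ^ 0 + a1 * t ^ 1 + a2 * t ^ 2)); [intros; simpl; ring|].
  repeat apply bigO_plus; apply bigO_monomial; lia.
Qed.

Lemma taylor2_bigO0 a a0 a1 a2 : taylor2 a a0 a1 a2 -> bigO 0 a.
Proof.
  intros Ha. apply (bigO_ext 0 (fun t => (a0 + a1 * t + a2 * t ^ 2)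
    + (a t - (a0 + a1 * t + a2 * t ^ 2)))); [intros; ring|].
  apply bigO_plus; [apply bigO0_quadratic|apply (bigO_weaken 0 3); [lia|exact Ha]].
Qed.

Lemma taylor2_mul a b a0 a1 a2 b0 b1 b2 : taylor2 a a0 a1 a2 -> taylor2 b b0 b1 b2 ->
  taylor2 (fun t => a t * b t)
    (a0 * b0) (a0 * b1 + a1 * b0) (a0 * b2 + a1 * b1 + a2 * b0).
Proof.
  intros Ha Hb. unfold taylor2.
  set (p := fun t => a0 + a1 * t + a2 * t ^ 2).
  set (q := fun t => b0 + b1 * t + b2 * t ^ 2).
  (* [a b - p q = p (b - q) + (a - p) b], and [p q] is the claimed quadratic plus two monomials *)
  apply (bigO_ext 3 (fun t => ((a1 * b2 + a2 * b1) * t ^ 3 + (a2 * b2) * t ^ 4)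
    + p t * (b t - q t) + (a t - p t) * b t)); [intros; unfold p, q; simpl; ring|].
  repeat apply bigO_plus.
  - apply bigO_monomial; lia.
  - apply bigO_monomial; lia.
  - apply (bigO_mul 0 3); [apply bigO0_quadratic|exact Hb].
  - apply (bigO_weaken 3 (3 + 0)); [lia|].
    apply bigO_mul; [exact Ha|exact (taylor2_bigO0 _ _ _ _ Hb)].
Qed.

Lemma taylor2_fsum m (F : nat -> R -> R) c0 c1 c2 :
  (forall k, (k < m)%nat -> taylor2 (F k) (c0 k) (c1 k) (c2 k)) ->
  taylor2 (fun t => fsum m (fun k => F k t)) (fsum m c0) (fsum m c1) (fsum m c2).
Proof.
  induction m as [|m IH]; intros H; [change (taylor2 (fun _ => 0) 0 0 0); apply taylor2_const|].
  rewrite !fsum_S. apply (taylor2_ext (fun t => fsum m (fun k => F k t) + F m t)).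
  - intros. now rewrite fsum_S.
  - apply taylor2_plus; [apply IH; intros|]; apply H; lia.
Qed.

Lemma taylor2_vanish a a0 a1 a2 : taylor2 a a0 a1 a2 -> (forall t, 0 < t -> a t = 0) ->
  a0 = 0 /\ a1 = 0 /\ a2 = 0.
Proof.
  intros Ha Hz.
  assert (H3 : bigO 3 (fun t => a0 + t * (a1 + t * (a2 + t * 0)))).
  { apply (bigO_ext 3 (fun t => -1 * (a t - (a0 + a1 * t + a2 * t ^ 2)))).
    - intros t Ht. rewrite Hz by exact Ht. simpl. ring.
    - now apply bigO_scal. }
  apply bigO_peel in H3 as [-> H2]; [|apply (bigO_ext 0 (fun t => a1 + a2 * t + 0 * t ^ 2));
    [intros; ring|apply bigO0_quadratic]].
  apply bigO_peel in H2 as [-> H1]; [|apply (bigO_ext 0 (fun t => a2 + 0 * t + 0 * t ^ 2));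
    [intros; ring|apply bigO0_quadratic]].
  apply bigO_peel in H1 as [-> _]; [auto|].
  apply (bigO_ext 0 (fun t => 0 + 0 * t + 0 * t ^ 2)); [intros; ring|apply bigO0_quadratic].
Qed.

Lemma taylor2_scal c a a0 a1 a2 : taylor2 a a0 a1 a2 ->
  taylor2 (fun t => c * a t) (c * a0) (c * a1) (c * a2).
Proof. intros Ha. eapply bigO_ext; [|apply (bigO_scal _ c _ Ha)]. intros; simpl; ring. Qed.

Lemma taylor2_unique a b a0 a1 a2 b0 b1 b2 : taylor2 a a0 a1 a2 -> taylor2 b b0 b1 b2 ->
  (forall t, 0 < t -> a t = b t) -> a0 = b0 /\ a1 = b1 /\ a2 = b2.
Proof.
  intros Ha Hb E.
  destruct (taylor2_vanish (fun t => a t + -1 * b t) _ _ _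
    (taylor2_plus _ _ _ _ _ _ _ _ Ha (taylor2_scal (-1) _ _ _ _ Hb))) as [E0 [E1 E2]].
  - intros t Ht. rewrite E by exact Ht. ring.
  - lra.
Qed.

Definition mtaylor2 (n : nat) (f : R -> mat) (P0 P1 P2 : mat) : Prop :=
  forall i j, (i < n)%nat -> (j < n)%nat ->
    taylor2 (fun t => f t i j) (P0 i j) (P1 i j) (P2 i j).

Lemma mtaylor2_mul n f g P0 P1 P2 Q0 Q1 Q2 : mtaylor2 n f P0 P1 P2 -> mtaylor2 n g Q0 Q1 Q2 ->
  mtaylor2 n (fun t => mmul n (f t) (g t)) (mmul n P0 Q0)
    (madd (mmul n P0 Q1) (mmul n P1 Q0))
    (madd (madd (mmul n P0 Q2) (mmul n P1 Q1)) (mmul n P2 Q0)).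
Proof.
  intros Hf Hg i j Hi Hj. unfold mmul, madd. rewrite <- !fsum_plus.
  apply (taylor2_fsum n (fun k t => f t i k * g t k j) (fun k => P0 i k * Q0 k j)
    (fun k => P0 i k * Q1 k j + P1 i k * Q0 k j)
    (fun k => P0 i k * Q2 k j + P1 i k * Q1 k j + P2 i k * Q0 k j)).
  intros k Hk. apply taylor2_mul; [apply Hf|apply Hg]; auto.
Qed.

Lemma mtaylor2_mmul_l n C f P0 P1 P2 : mtaylor2 n f P0 P1 P2 ->
  mtaylor2 n (fun t => mmul n C (f t)) (mmul n C P0) (mmul n C P1) (mmul n C P2).
Proof.
  intros Hf i j Hi Hj. apply (taylor2_fsum n (fun k t => C i k * f t k j)).
  intros k Hk. apply taylor2_scal, Hf; auto.
Qed.

Lemma mtaylor2_mmul_r n C f P0 P1 P2 : mtaylor2 n f P0 P1 P2 ->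
  mtaylor2 n (fun t => mmul n (f t) C) (mmul n P0 C) (mmul n P1 C) (mmul n P2 C).
Proof.
  intros Hf i j Hi Hj. apply (taylor2_fsum n (fun k t => f t i k * C k j)).
  intros k Hk. apply (taylor2_ext (fun t => C k j * f t i k)); [intros; ring|].
  eapply bigO_ext; [|apply (taylor2_scal (C k j) _ _ _ _ (Hf i k Hi Hk))]. intros; simpl; ring.
Qed.

Lemma mtaylor2_commute n f P0 P1 P2 O : mtaylor2 n f P0 P1 P2 ->
  (forall t, 0 < t -> meq n (mmul n O (f t)) (mmul n (f t) O)) ->
  meq n (mmul n O P1) (mmul n P1 O) /\ meq n (mmul n O P2) (mmul n P2 O).
Proof.
  intros Hf Hc. split; intros i j Hi Hj;
  destruct (taylor2_unique _ _ _ _ _ _ _ _ (mtaylor2_mmul_l n O f _ _ _ Hf i j Hi Hj)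
    (mtaylor2_mmul_r n O f _ _ _ Hf i j Hi Hj)) as [_ [E1 E2]]; auto;
  intros t Ht; now apply Hc.
Qed.

(** * The matrix exponential near 0 *)

Lemma mpow_bound n A a m i j : 0 <= a ->
  (forall i j, (i < n)%nat -> (j < n)%nat -> Rabs (A i j) <= a) ->
  (i < n)%nat -> (j < n)%nat -> Rabs (mpow n A m i j) <= (INR n * a) ^ m.
Proof.
  intros Ha HA. revert i j. induction m as [|m IH]; intros i j Hi Hj; simpl.
  - unfold mid. destruct (Nat.eqb i j); [rewrite Rabs_R1|rewrite Rabs_R0]; lra.
  - eapply Rle_trans; [apply fsum_abs|].
    apply Rle_trans with (fsum n (fun _ => a * (INR n * a) ^ m)).
    + apply fsum_le. intros k Hk. rewrite Rabs_mult.
      apply Rmult_le_compat; auto using Rabs_pos.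
    + rewrite fsum_const. right. ring.
Qed.

Lemma geometric_series_cv y : 0 <= y < 1 ->
  Un_cv (fun N => sum_f_R0 (fun m => y ^ m) N) (/ (1 - y)).
Proof.
  intros Hy. apply (Un_cv_ext (fun N => sum_f_R0 (fun m => 1 * y ^ m) N)).
  - intros N. apply sum_eq. intros; ring.
  - apply GP_infinite. rewrite Rabs_pos_eq; lra.
Qed.

Lemma series_cv_geometric_bound (u : nat -> R) y : 0 <= y < 1 ->
  (forall m, Rabs (u m) <= y ^ m) -> exists l, Un_cv (fun N => sum_f_R0 u N) l.
Proof.
  intros Hy Hu.
  destruct (Rseries_CV_comp (fun m => u m + y ^ m) (fun m => y ^ m + y ^ m)) as [l Hl].
  - intros m. specialize (Hu m). pose proof (Rle_abs (u m)). pose proof (Rle_abs (- u m)).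
    rewrite Rabs_Ropp in *. lra.
  - exists (/ (1 - y) + / (1 - y)).
    apply (Un_cv_ext (fun N => sum_f_R0 (fun m => y ^ m) N + sum_f_R0 (fun m => y ^ m) N)).
    + intros N. now rewrite plus_sum.
    + apply CV_plus; now apply geometric_series_cv.
  - exists (l - / (1 - y)).
    apply (Un_cv_ext (fun N => sum_f_R0 (fun m => u m + y ^ m) N - sum_f_R0 (fun m => y ^ m) N)).
    + intros N. rewrite <- minus_sum. apply sum_eq. intros; ring.
    + apply CV_minus; [exact Hl|now apply geometric_series_cv].
Qed.

Section SmallExponential.
Variables (n : nat) (A : mat) (a : R).
Hypothesis a_ge0 : 0 <= a.
Hypothesis A_bound : forall i j, (i < n)%nat -> (j < n)%nat -> Rabs (A i j) <= a.
Hypothesis A_small : INR n * a <= 1/2.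

Lemma exp_term_bound i j m : (i < n)%nat -> (j < n)%nat ->
  Rabs (mpow n A m i j / INR (fact m)) <= (INR n * a) ^ m.
Proof.
  intros Hi Hj. pose proof (mpow_bound n A a m i j a_ge0 A_bound Hi Hj).
  assert (Hf : 1 <= INR (fact m)) by (apply (le_INR 1), lt_O_fact).
  unfold Rdiv. rewrite Rabs_mult, Rabs_inv, (Rabs_pos_eq (INR (fact m))) by lra.
  apply Rle_trans with (Rabs (mpow n A m i j) * 1); [|lra].
  apply Rmult_le_compat_l; [apply Rabs_pos|].
  rewrite <- Rinv_1. apply Rinv_le_contravar; lra.
Qed.

Lemma is_mexp_small : is_mexp n A (mexp n A).
Proof.
  assert (Hy : 0 <= INR n * a < 1) by (split; [apply Rmult_le_pos; [apply pos_INR|]|]; lra).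
  unfold mexp. apply epsilon_spec.
  exists (fun i j => epsilon (inhabits 0)
    (Un_cv (fun N => sum_f_R0 (fun m => mpow n A m i j / INR (fact m)) N))).
  intros i j Hi Hj. apply epsilon_spec.
  apply (series_cv_geometric_bound _ _ Hy). intros m. now apply exp_term_bound.
Qed.

Lemma mexp_second_order i j : (i < n)%nat -> (j < n)%nat ->
  Rabs (mexp n A i j - (mid i j + A i j + mmul n A A i j / 2)) <= 2 * (INR n * a) ^ 3.
Proof.
  intros Hi Hj.
  assert (Hy : 0 <= INR n * a <= 1/2) by (split; [apply Rmult_le_pos; [apply pos_INR|]|]; lra).
  set (y := INR n * a) in *.
  assert (Hsum2 : sum_f_R0 (fun m => mpow n A m i j / INR (fact m)) 2
                  = mid i j + A i j + mmul n A A i j / 2).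
  { simpl. rewrite mmul_mid_r by exact Hj.
    replace (mmul n A (mmul n A mid) i j) with (mmul n A A i j)
      by (apply fsum_ext; intros k _; now rewrite mmul_mid_r).
    simpl. field. }
  pose proof (sum_maj1 (fun m _ => mpow n A m i j / INR (fact m)) (fun m => y ^ m) 0
    (mexp n A i j) (/ (1 - y)) 2 (is_mexp_small i j Hi Hj) (geometric_series_cv y ltac:(lra))
    (fun m => exp_term_bound i j m Hi Hj)) as Htail.
  unfold SP in Htail. rewrite Hsum2, tech3 in Htail by lra.
  eapply Rle_trans; [exact Htail|].
  replace (/ (1 - y) - (1 - y ^ 3) / (1 - y)) with (y ^ 3 / (1 - y)) by (field; lra).
  assert (0 <= y ^ 3) by (apply pow_le; lra).
  apply Rmult_le_reg_r with (1 - y); [lra|].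
  unfold Rdiv. rewrite Rmult_assoc, Rinv_l by lra. nra.
Qed.
End SmallExponential.

Lemma mat_entry_bound n (M : mat) :
  exists m, 0 <= m /\ forall i j, (i < n)%nat -> (j < n)%nat -> Rabs (M i j) <= m.
Proof.
  exists (fsum n (fun i => fsum n (fun j => Rabs (M i j)))).
  assert (Hrow : forall i, 0 <= fsum n (fun j => Rabs (M i j)))
    by (intros; rewrite <- (fsum_zero n); apply fsum_le; intros; apply Rabs_pos).
  split; [rewrite <- (fsum_zero n); apply fsum_le; auto|].
  intros i j Hi Hj.
  apply Rle_trans with (fsum n (fun j => Rabs (M i j))).
  - apply (fsum_ge_term n j (fun j => Rabs (M i j))); auto. intros; apply Rabs_pos.
  - apply (fsum_ge_term n i (fun i => fsum n (fun j => Rabs (M i j)))); auto.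
Qed.

Lemma mexp_taylor2 n M :
  mtaylor2 n (fun t => mexp n (mscale (- t) M)) mid (mopp M) (mscale (/2) (mmul n M M)).
Proof.
  intros i j Hi Hj.
  destruct (mat_entry_bound n M) as [m [Hm0 Hm]].
  set (c := INR n * m). assert (Hc : 0 <= c) by (apply Rmult_le_pos; [apply pos_INR|auto]).
  exists (2 * c ^ 3), (/ (2 * (c + 1))).
  split; [apply Rinv_0_lt_compat; lra|]. intros t [Ht Ht0].
  assert (Hsmall : INR n * (t * m) <= 1/2).
  { apply (Rmult_le_compat_r (2 * (c + 1))) in Ht0; [|lra].
    rewrite Rinv_l in Ht0 by lra. unfold c in *. nra. }
  assert (Hbound : forall i j, (i < n)%nat -> (j < n)%nat -> Rabs (mscale (- t) M i j) <= t * m).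
  { intros a b Ha Hb. unfold mscale. rewrite Rabs_mult, Rabs_Ropp, (Rabs_pos_eq t) by lra.
    apply Rmult_le_compat_l; [lra|auto]. }
  pose proof (mexp_second_order n (mscale (- t) M) (t * m) ltac:(nra) Hbound Hsmall i j Hi Hj) as H.
  replace (mmul n (mscale (- t) M) (mscale (- t) M) i j) with (t ^ 2 * mmul n M M i j) in H
    by (unfold mmul, mscale; rewrite <- fsum_scal; apply fsum_ext; intros; ring).
  replace (2 * c ^ 3 * t ^ 3) with (2 * (INR n * (t * m)) ^ 3) by (unfold c; ring).
  replace (mid i j + mopp M i j * t + mscale (/ 2) (mmul n M M) i j * t ^ 2)
    with (mid i j + mscale (- t) M i j + t ^ 2 * mmul n M M i j / 2)
    by (unfold mopp, mscale; field).
  exact H.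
Qed.

Definition Pi_coeff1 (n : nat) (M : mat) : mat :=
  madd (mmul n mid (mopp (mtr M))) (mmul n (mopp M) mid).

Definition Pi_coeff2 (n : nat) (M : mat) : mat :=
  madd (madd (mmul n mid (mscale (/2) (mmul n (mtr M) (mtr M))))
             (mmul n (mopp M) (mopp (mtr M))))
       (mmul n (mscale (/2) (mmul n M M)) mid).

Lemma Pi_taylor2 n M :
  mtaylor2 n (fun t => Pi n M (exp t)) (mmul n mid mid) (Pi_coeff1 n M) (Pi_coeff2 n M).
Proof.
  intros i j Hi Hj.
  apply (taylor2_ext (fun t => mmul n (mexp n (mscale (- t) M)) (mexp n (mscale (- t) (mtr M))) i j)).
  - intros t _. unfold Pi, mxpowneg. now rewrite ln_exp.
  - now apply mtaylor2_mul; try apply mexp_taylor2.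
Qed.

Definition commute (n : nat) (O A : mat) : Prop :=
  forall w r, (r < n)%nat -> mapply n O (mapply n A w) r = mapply n A (mapply n O w) r.

Lemma meq_commute n O A : meq n (mmul n O A) (mmul n A O) -> commute n O A.
Proof. intros H w r Hr. now rewrite <- !mapply_mmul, (mapply_meq n _ _ _ _ H). Qed.

Lemma Pi_commute_coeffs n M O :
  (forall x, 0 < x -> meq n (mmul n O (Pi n M x)) (mmul n (Pi n M x) O)) ->
  commute n O (Pi_coeff1 n M) /\ commute n O (Pi_coeff2 n M).
Proof.
  intros H.
  destruct (mtaylor2_commute n _ _ _ _ O (Pi_taylor2 n M)) as [H1 H2].
  - intros t _. apply H, exp_pos.
  - split; now apply meq_commute.
Qed.

(** * The commutant of the family Pi_x *)

Lemma mapply_lincomb n A x y c i :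
  mapply n A (fun r => x r + c * y r) i = mapply n A x i + c * mapply n A y i.
Proof. unfold mapply. rewrite <- fsum_scal, <- fsum_plus. apply fsum_ext. intros; ring. Qed.

Section SymmetricPlusSkew.
Variables (n : nat) (S L : mat).
Hypothesis S_sym : symmetric n S.
Hypothesis L_skew : skew n L.

Lemma mapply_tr_sym_skew x r : (r < n)%nat ->
  mapply n (mtr (madd S L)) x r = mapply n S x r + -1 * mapply n L x r.
Proof.
  intros Hr. change (mtr (madd S L)) with (madd (mtr S) (mtr L)).
  rewrite mapply_madd, mapply_mtr_sym, mapply_mtr_skew by auto. ring.
Qed.

Lemma Pi_coeff1_apply w r : (r < n)%nat ->
  mapply n (Pi_coeff1 n (madd S L)) w r = -2 * mapply n S w r.
Proof.
  intros Hr. unfold Pi_coeff1.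
  rewrite mapply_madd, !mapply_mmul, mapply_mid, mapply_mopp, mapply_mopp by exact Hr.
  rewrite (mapply_ext n _ (mapply n mid w) w) by (intros; now apply mapply_mid).
  rewrite mapply_tr_sym_skew, mapply_madd by exact Hr. ring.
Qed.

Lemma Pi_coeff2_apply w r : (r < n)%nat ->
  mapply n (Pi_coeff2 n (madd S L)) w r
  = 2 * mapply n S (mapply n S w) r
    + mapply n L (mapply n S w) r - mapply n S (mapply n L w) r.
Proof.
  intros Hr. set (M := madd S L).
  assert (HM : forall x r, mapply n M x r = mapply n S x r + 1 * mapply n L x r)
    by (intros; unfold M; rewrite mapply_madd; ring).
  assert (HMt : forall x r, (r < n)%nat ->
    mapply n (mtr M) x r = mapply n S x r + -1 * mapply n L x r)
    by (intros; now apply mapply_tr_sym_skew).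
  unfold Pi_coeff2.
  rewrite !mapply_madd, !mapply_mmul, mapply_mid, !mapply_mscale, !mapply_mmul by exact Hr.
  rewrite (mapply_ext n M (mapply n M (mapply n mid w)) (mapply n M w))
    by (intros; apply mapply_ext; intros; now apply mapply_mid).
  rewrite mapply_mopp, (mapply_ext n M (mapply n (mopp (mtr M)) w)
    (fun r => -1 * mapply n (mtr M) w r)) by (intros; rewrite mapply_mopp; ring).
  rewrite mapply_scal.
  rewrite (mapply_ext n (mtr M) (mapply n (mtr M) w) (fun r => mapply n S w r + -1 * mapply n L w r)),
    (mapply_ext n M (mapply n (mtr M) w) (fun r => mapply n S w r + -1 * mapply n L w r)),
    (mapply_ext n M (mapply n M w) (fun r => mapply n S w r + 1 * mapply n L w r))
    by (intros; auto).
  rewrite HMt, !HM, !mapply_lincomb by exact Hr.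
  field.
Qed.

Lemma commute_of_Pi_coeff1 O : commute n O (Pi_coeff1 n (madd S L)) -> commute n O S.
Proof.
  intros H w r Hr. apply Rmult_eq_reg_l with (-2); [|lra].
  rewrite <- mapply_scal, <- Pi_coeff1_apply by exact Hr.
  rewrite <- H by exact Hr. apply mapply_ext. intros. now rewrite Pi_coeff1_apply.
Qed.
End SymmetricPlusSkew.

Lemma dot_plus_r n x y z : dot n x (fun r => y r + z r) = dot n x y + dot n x z.
Proof. unfold dot. rewrite <- fsum_plus. apply fsum_ext. intros; ring. Qed.

Lemma map_as_nth (l : list nat) (g : nat -> R) :
  map g l = map (fun i => g (nth i l 0%nat)) (seq 0 (length l)).
Proof.
  induction l as [|a l IH]; simpl; [reflexivity|].
  now rewrite IH, <- seq_shift, map_map.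
Qed.

Lemma fsum_filter (p : nat -> bool) n g :
  (forall j, (j < n)%nat -> p j = false -> g j = 0) ->
  fsum n g = fsum (length (filter p (seq 0 n))) (fun l => g (nth l (filter p (seq 0 n)) 0%nat)).
Proof.
  intros H. unfold fsum. rewrite <- map_as_nth.
  assert (Hl : forall j, In j (seq 0 n) -> p j = false -> g j = 0)
    by (intros j Hj; apply in_seq in Hj; apply H; lia).
  induction (seq 0 n) as [|a l IH]; simpl; [reflexivity|].
  destruct (p a) eqn:Ep; simpl; rewrite IH by (intros; apply Hl; simpl; auto); [reflexivity|].
  rewrite (Hl a); simpl; auto; ring.
Qed.

Section Commutant.
Variables (n : nat) (S L O Q : mat) (lam : nat -> R) (v : nat -> vec).
Hypothesis S_sym : symmetric n S.
Hypothesis L_skew : skew n L.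
Hypothesis O_orth : orthogonal n O.
Hypothesis O_S : commute n O S.
Hypothesis O_Q : commute n O Q.
Hypothesis Q_apply : forall w r, (r < n)%nat ->
  mapply n Q w r = 2 * mapply n S (mapply n S w) r
                   + mapply n L (mapply n S w) r - mapply n S (mapply n L w) r.
Hypothesis lam_inj : forall i j, (i < n)%nat -> (j < n)%nat -> i <> j -> lam i <> lam j.
Hypothesis v_nz : forall i, (i < n)%nat -> exists r, (r < n)%nat /\ v i r <> 0.
Hypothesis v_eig : forall i, (i < n)%nat -> eigvec n S (lam i) (v i).

Lemma v_orth i j : (i < n)%nat -> (j < n)%nat -> i <> j -> dot n (v i) (v j) = 0.
Proof. intros. apply (dot_eigvec_sym n S (lam i) (lam j)); auto. Qed.

Lemma v_pos i : (i < n)%nat -> 0 < dot n (v i) (v i).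
Proof. intros. now apply dot_self_pos, v_nz. Qed.

Lemma eigvec_parallel i w : (i < n)%nat -> eigvec n S (lam i) w ->
  forall r, (r < n)%nat -> w r = (dot n (v i) w / dot n (v i) (v i)) * v i r.
Proof.
  intros Hi Hw r Hr. rewrite (orth_family_expand n v v_orth v_pos w r Hr) at 1.
  rewrite (fsum_single n i); auto. intros j Hj Hji.
  rewrite (dot_eigvec_sym n S (lam j) (lam i)); auto. unfold Rdiv. ring.
Qed.

Definition sign i : R := dot n (v i) (mapply n O (v i)) / dot n (v i) (v i).

Lemma O_v i r : (i < n)%nat -> (r < n)%nat -> mapply n O (v i) r = sign i * v i r.
Proof.
  intros Hi Hr. apply (eigvec_parallel i); auto. intros s Hs.
  rewrite <- O_S by exact Hs. rewrite (mapply_ext n O _ (fun r => lam i * v i r)) by apply v_eig, Hi.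
  apply mapply_scal.
Qed.

Lemma sign_sq i : (i < n)%nat -> sign i * sign i = 1.
Proof.
  intros Hi. pose proof (v_pos i Hi).
  assert (E : dot n (mapply n O (v i)) (mapply n O (v i))
              = sign i * sign i * dot n (v i) (v i)).
  { rewrite (dot_ext n _ _ (fun r => sign i * v i r) (fun r => sign i * v i r))
      by (intros; now apply O_v).
    rewrite dot_scal_l, dot_scal_r. ring. }
  rewrite orthogonal_dot in E by exact O_orth.
  apply Rmult_eq_reg_r with (dot n (v i) (v i)); lra.
Qed.

Lemma sign_cases i : (i < n)%nat -> sign i = 1 \/ sign i = -1.
Proof.
  intros Hi. pose proof (sign_sq i Hi).
  destruct (Rmult_integral (sign i - 1) (sign i + 1)); [ring_simplify; lra|left|right]; lra.
Qed.

Lemma Otr_v i r : (i < n)%nat -> (r < n)%nat -> mapply n (mtr O) (v i) r = sign i * v i r.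
Proof.
  intros Hi Hr.
  assert (E : v i r = sign i * mapply n (mtr O) (v i) r).
  { rewrite <- mapply_scal, <- (mapply_ext n _ (mapply n O (v i))) by (intros; now apply O_v).
    now rewrite <- mapply_mmul, (mapply_meq n _ mid), mapply_mid. }
  rewrite E, <- Rmult_assoc, sign_sq by exact Hi. ring.
Qed.

Lemma dot_Q_v i j : (i < n)%nat -> (j < n)%nat -> i <> j ->
  dot n (v i) (mapply n Q (v j)) = (lam j - lam i) * dot n (v i) (mapply n L (v j)).
Proof.
  intros Hi Hj Hij.
  rewrite (dot_ext n _ _ (v i) (fun r => (2 * lam j * lam j * v j r + lam j * mapply n L (v j) r)
    + -1 * mapply n S (mapply n L (v j)) r)); auto.
  2:{ intros r Hr. rewrite Q_apply by exact Hr.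
      rewrite (mapply_ext n S _ (fun r => lam j * v j r)), (mapply_ext n L _ (fun r => lam j * v j r))
        by (intros; now apply v_eig).
      rewrite !mapply_scal, v_eig by auto. ring. }
  rewrite !dot_plus_r, !dot_scal_r, (dot_sym n S (v i) (mapply n L (v j)) S_sym), v_orth by auto.
  rewrite (dot_ext n (mapply n S (v i)) (mapply n L (v j)) (fun r => lam i * v i r) (mapply n L (v j))), dot_scal_l
    by (intros; auto; now apply (v_eig i Hi)).
  ring.
Qed.

Lemma dot_L_v i j : (i < n)%nat -> (j < n)%nat -> sign i <> sign j ->
  dot n (v i) (mapply n L (v j)) = 0.
Proof.
  intros Hi Hj Hsign. assert (Hij : i <> j) by congruence.
  assert (E1 : dot n (v i) (mapply n O (mapply n Q (v j))) = sign i * dot n (v i) (mapply n Q (v j))).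
  { rewrite dot_mapply, <- dot_scal_l. apply dot_ext; auto. intros; now apply Otr_v. }
  assert (E2 : dot n (v i) (mapply n Q (mapply n O (v j))) = sign j * dot n (v i) (mapply n Q (v j))).
  { rewrite <- dot_scal_r. apply dot_ext; auto. intros r Hr.
    rewrite <- mapply_scal. apply mapply_ext. intros; now apply O_v. }
  assert (E : sign i * dot n (v i) (mapply n Q (v j)) = sign j * dot n (v i) (mapply n Q (v j))).
  { rewrite <- E1, <- E2. apply dot_ext; [auto|exact (O_Q (v j))]. }
  rewrite dot_Q_v in E by auto.
  apply Rmult_eq_reg_l with ((sign i - sign j) * (lam j - lam i)); [lra|].
  intros Hz. apply Rmult_integral in Hz as [|]; [lra|].
  apply (lam_inj j i); auto. lra.
Qed.

Lemma O_scalar s : (forall i, (i < n)%nat -> sign i = s) ->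
  forall a b, (a < n)%nat -> (b < n)%nat -> O a b = s * mid a b.
Proof.
  intros Hs a b Ha Hb.
  set (e := fun r => mid r b).
  set (coef := fun j => dot n (v j) e / dot n (v j) (v j)).
  assert (He : forall r, (r < n)%nat -> e r = fsum n (fun j => coef j * v j r))
    by (intros; now apply orth_family_expand; [apply v_orth|apply v_pos|]).
  transitivity (mapply n O e a); [unfold mapply, e; now rewrite fsum_mid_r|].
  rewrite (mapply_ext n O e _ a He), mapply_fsum.
  rewrite (fsum_ext n _ (fun j => s * (coef j * v j a)))
    by (intros j Hj; rewrite O_v, Hs by auto; ring).
  rewrite fsum_scal, <- He by exact Ha. reflexivity.
Qed.

Definition positive i : bool := if Req_EM_T (sign i) 1 then true else false.

Lemma L_positive_span j : (j < n)%nat -> sign j = 1 ->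
  let P := filter positive (seq 0 n) in
  in_span n (length P) (fun l => v (nth l P 0%nat)) (mapply n L (v j)).
Proof.
  intros Hj Hsj P.
  exists (fun l => dot n (v (nth l P 0%nat)) (mapply n L (v j))
                  / dot n (v (nth l P 0%nat)) (v (nth l P 0%nat))).
  intros r Hr. rewrite (orth_family_expand n v v_orth v_pos _ r Hr).
  apply (fsum_filter positive n (fun i => dot n (v i) (mapply n L (v j)) / dot n (v i) (v i) * v i r)).
  intros i Hi Hpos. rewrite dot_L_v; auto; [unfold Rdiv; ring|].
  unfold positive in Hpos. destruct (Req_EM_T (sign i) 1); [discriminate|congruence].
Qed.

Lemma mixed_signs_share_invariant :
  (exists i, (i < n)%nat /\ sign i = 1) -> (exists j, (j < n)%nat /\ sign j = -1) ->
  exists k, (1 <= k)%nat /\ (k <= n - 1)%nat /\ share_invariant n k S L.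
Proof.
  intros [i0 [Hi0 Ei0]] [j0 [Hj0 Ej0]].
  set (P := filter positive (seq 0 n)).
  assert (HP : forall l, (l < length P)%nat -> (nth l P 0 < n)%nat /\ sign (nth l P 0%nat) = 1).
  { intros l Hl. pose proof (nth_In P 0%nat Hl) as HI.
    apply filter_In in HI as [HI Hp]. apply in_seq in HI. split; [lia|].
    unfold positive in Hp. destruct (Req_EM_T (sign (nth l P 0%nat)) 1); congruence. }
  exists (length P). split; [|split].
  - assert (In i0 P).
    { apply filter_In. split; [apply in_seq; lia|].
      unfold positive. destruct (Req_EM_T (sign i0) 1); congruence. }
    destruct P; [contradiction|simpl; lia].
  - assert (length P <> n).
    { intros E. rewrite <- (length_seq n 0) in E.
      apply filter_length_forallb, forallb_forall with (x := j0) in E; [|apply in_seq; lia].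
      unfold positive in E. destruct (Req_EM_T (sign j0) 1); [lra|discriminate]. }
    pose proof (filter_length_le positive (seq 0 n)) as Hle.
    fold P in Hle. rewrite length_seq in Hle. lia.
  - exists (fun l => v (nth l P 0%nat)). split; [|split].
    + apply orth_family_lin_indep; [apply v_orth|apply v_pos|apply HP|].
      intros l m Hl Hm. apply NoDup_nth; auto. apply NoDup_filter, seq_NoDup.
    + intros l Hl. exists (fun m => if Nat.eqb m l then lam (nth l P 0%nat) else 0).
      intros r Hr. rewrite (fsum_single _ l) by (auto; intros m _ Hm;
        now rewrite (proj2 (Nat.eqb_neq m l) Hm), Rmult_0_l).
      rewrite Nat.eqb_refl. apply v_eig; auto. apply HP, Hl.
    + intros l Hl. apply L_positive_span; apply HP, Hl.
Qed.

Lemma commutant_scalar_or_shared_invariant :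
  meq n O mid \/ meq n O (mopp mid) \/
  exists k, (1 <= k)%nat /\ (k <= n - 1)%nat /\ share_invariant n k S L.
Proof.
  destruct (classic (exists j, (j < n)%nat /\ sign j = -1)) as [Hneg|Hneg];
  [destruct (classic (exists i, (i < n)%nat /\ sign i = 1)) as [Hpos|Hpos]|].
  - right; right. now apply mixed_signs_share_invariant.
  - right; left. intros a b Ha Hb. rewrite (O_scalar (-1)); [unfold mopp; ring|..|auto|auto].
    intros i Hi. destruct (sign_cases i Hi); [exfalso; eauto|auto].
  - left. intros a b Ha Hb. rewrite (O_scalar 1); [ring|..|auto|auto].
    intros i Hi. destruct (sign_cases i Hi); [auto|exfalso; eauto].
Qed.
End Commutant.

Lemma sym_distinct_eigenbasis n S : sym_distinct n S ->
  exists (lam : nat -> R) (v : nat -> vec),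
    (forall i j, (i < n)%nat -> (j < n)%nat -> i <> j -> lam i <> lam j) /\
    (forall i, (i < n)%nat -> exists r, (r < n)%nat /\ v i r <> 0) /\
    (forall i, (i < n)%nat -> eigvec n S (lam i) (v i)).
Proof.
  intros [_ [lam [Hinj Heig]]].
  set (P := fun i (w : vec) => (exists r, (r < n)%nat /\ w r <> 0) /\ eigvec n S (lam i) w).
  assert (Hv : forall i, (i < n)%nat -> P i (epsilon (inhabits (fun _ => 0)) (P i)))
    by (intros i Hi; apply epsilon_spec, Heig, Hi).
  exists lam, (fun i => epsilon (inhabits (fun _ => 0)) (P i)).
  repeat split; auto; intros i Hi; apply Hv, Hi.
Qed.

Lemma scalar_inG n P s O : s * s = 1 ->
  (forall a b, (a < n)%nat -> (b < n)%nat -> O a b = s * mid a b) -> inG n P O.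
Proof.
  intros Hs HO. split; intros i j Hi Hj; unfold mmul.
  - rewrite (fsum_ext _ _ (fun k => (s * s) * (mid i k * mid k j))), fsum_scal, Hs,
      (fsum_mid_l n (fun k => mid k j)) by (auto; intros k Hk; unfold mtr;
      rewrite !HO by auto; unfold mid; destruct (Nat.eqb_spec k i), (Nat.eqb_spec i k);
      lia || ring).
    ring.
  - rewrite (fsum_ext _ _ (fun k => s * (mid i k * P k j))),
      (fsum_ext n (fun k => P i k * O k j) (fun k => s * (P i k * mid k j))), !fsum_scal,
      (fsum_mid_l n (fun k => P k j)), (fsum_mid_r n (fun k => P i k))
      by (auto; intros; rewrite HO by auto; ring).
    reflexivity.
Qed.

Theorem proposition5p1 (n : nat) (S L : mat) :
  (2 <= n)%nat ->
  sym_distinct n S ->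
  skew n L ->
  (forall k, (1 <= k)%nat -> (k <= n - 1)%nat -> ~ share_invariant n k S L) ->
  forall O : mat,
    (forall x : R, 0 < x -> inG n (Pi n (madd S L) x) O) <->
    (meq n O mid \/ meq n O (mopp mid)).
Proof.
  intros _ HS HL Hno O. split.
  - intros HPi.
    destruct (Pi_commute_coeffs n (madd S L) O) as [H1 H2];
      [intros x Hx; apply (HPi x Hx)|].
    destruct (sym_distinct_eigenbasis n S HS) as [lam [v [Hinj [Hnz Heig]]]].
    destruct (commutant_scalar_or_shared_invariant n S L O (Pi_coeff2 n (madd S L)) lam v)
      as [HO|[HO|[k [Hk1 [Hk2 Hshared]]]]]; auto.
    + apply HS.
    + apply (HPi 1). lra.
    + exact (commute_of_Pi_coeff1 n S L (proj1 HS) HL O H1).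
    + exact (Pi_coeff2_apply n S L (proj1 HS) HL).
    + exfalso. exact (Hno k Hk1 Hk2 Hshared).
  - intros [HO|HO] x _; [apply (scalar_inG n _ 1)|apply (scalar_inG n _ (-1))]; try ring;
      intros a b Ha Hb; rewrite HO by auto; unfold mopp; ring.
Qed.
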